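(* Let $\Sigma=(I,X,\mathcal U,\phi,Y,h)$ be a forward complete control system with outputs. If $\Sigma$ is OUAG and BORS, then $\Sigma$ is OUGB.
   Context: Let $I\in\{\mathbb N_0,\mathbb R_0^+\}$. A forward complete control system with outputs $\Sigma=(I,X,\mathcal U,\phi,Y,h)$ consists of: a normed space $(X,\|\cdot\|_X)$; a vector space $U$ and a normed linear subspace $(\mathcal U,\|\cdot\|_{\mathcal U})$ of $\{u:I\to U\}$ such that for all $u\in\mathcal U,\tau\in I$, $u(\cdot+\tau)\in\mathcal U$ with $\|u(\cdot+\tau)\|_{\mathcal U}\le\|u\|_{\mathcal U}$, and for $t_2\ge t_1\ge 0$ the function $u|_{[t_1,t_2]}$ ($u$ on $[t_1,t_2]$, $0$ elsewhere) lies in $\mathcal U$ with norm $\le\|u\|_{\mathcal U}$; a map $\phi:I\times X\times\mathcal U\to X$ with $\phi(0,x,u)=x$, causality, and cocycle property $\phi(t+s,x,u)=\phi(s,\phi(t,x,u),u(t+\cdot))$; a normed space $Y$ and $h:X\times U\to Y$. Write $y(t,x,u)=h(\phi(t,x,u),u(t))$, $B_r=\{x:\|x\|_X<r\}$, $B_{r,\mathcal U}=\{u:\|u\|_{\mathcal U}<r\}$; $\mathcal K_\infty$ = unbounded continuous strictly increasing functions $\mathbb R_0^+\to\mathbb R_0^+$ vanishing at $0$. OUAG: $\exists\gamma\in\mathcal K_\infty$ such that for all $\varepsilon,r,s>0$ there is $\tau\in I$ with $\|y(t,x,u)\|_Y\le\varepsilon+\gamma(\|u\|_{\mathcal U})$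 for all $x\in B_r,u\in B_{s,\mathcal U},t\ge\tau$. BORS: for all $C>0,\tau\in I$: $\sup\{\|y(t,x,u)\|_Y:\|x\|_X<C,\|u\|_{\mathcal U}<C,t\in I,t<\tau\}<\infty$. OUGB: $\exists\sigma,\gamma\in\mathcal K_\infty,c>0$ with $\|y(t,x,u)\|_Y\le\sigma(\|x\|_X)+\gamma(\|u\|_{\mathcal U})+c$ for all $x\in X,u\in\mathcal U,t\in I$. *)

From HB Require Import structures.
From mathcomp Require Import all_boot all_order all_algebra.
From mathcomp Require Import all_classical all_reals all_analysis.
Set Implicit Arguments. Unset Strict Implicit. Unset Printing Implicit Defensive.
Import Order.TTheory GRing.Theory Num.Theory.
Import numFieldNormedType.Exports.
Local Open Scope classical_set_scope.
Local Open Scope ring_scope.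

(* Time domain I: discrete (I = N_0, embedded in R) or continuous (I = R_0^+). *)
Definition inI {R : realType} (disc : bool) (t : R) : Prop :=
  if disc then exists n : nat, t = n%:R else 0 <= t.

(* Inputs u : I -> U are represented as functions R -> U vanishing outside I. *)
Definition shift {R : realType} {U : lmodType R} (disc : bool)
  (u : R -> U) (tau : R) : R -> U :=
  fun t => if `[< inI disc t >] then u (t + tau) else 0.

Definition restr {R : realType} {U : lmodType R}
  (u : R -> U) (t1 t2 : R) : R -> U :=
  fun t => if (t1 <= t) && (t <= t2) then u t else 0.

Record CSys (R : realType) (X : normedModType R) (U : lmodType R)
    (Y : normedModType R) := {
  disc : bool;
  Uin : set (R -> U);
  Unorm : (R -> U) -> R;
  phi : R -> X -> (R -> U) -> X;
  h : X -> U -> Y;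
  Uin_supp : forall u, Uin u -> forall t, ~ inI disc t -> u t = 0;
  Uin_zero : Uin (fun _ => 0);
  Uin_add : forall u v, Uin u -> Uin v -> Uin (fun t => u t + v t);
  Uin_scale : forall (a : R) u, Uin u -> Uin (fun t => a *: u t);
  Unorm_ge0 : forall u, Uin u -> 0 <= Unorm u;
  Unorm_eq0 : forall u, Uin u -> Unorm u = 0 -> u = (fun _ => 0);
  Unorm_scale : forall (a : R) u, Uin u -> Unorm (fun t => a *: u t) = `|a| * Unorm u;
  Unorm_triangle : forall u v, Uin u -> Uin v ->
    Unorm (fun t => u t + v t) <= Unorm u + Unorm v;
  Uin_shift : forall u tau, Uin u -> inI disc tau ->
    Uin (shift disc u tau) /\ Unorm (shift disc u tau) <= Unorm u;
  Uin_restr : forall u t1 t2, Uin u -> 0 <= t1 -> t1 <= t2 ->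
    Uin (restr u t1 t2) /\ Unorm (restr u t1 t2) <= Unorm u;
  phi_0 : forall x u, Uin u -> phi 0 x u = x;
  phi_causal : forall t x u v, inI disc t -> Uin u -> Uin v ->
    (forall s, 0 <= s -> s <= t -> u s = v s) -> phi t x u = phi t x v;
  phi_cocycle : forall t s x u, inI disc t -> inI disc s -> Uin u ->
    phi (t + s) x u = phi s (phi t x u) (shift disc u t)
}.

Section Props.
Context {R : realType} {X : normedModType R} {U : lmodType R}
  {Y : normedModType R} (S : CSys X U Y).

Definition yout (t : R) (x : X) (u : R -> U) : Y := h S (phi S t x u) (u t).

Definition Kinf (f : R -> R) : Prop :=
  f 0 = 0 /\ {within `[0, +oo[, continuous f} /\
  (forall a b, 0 <= a -> a < b -> f a < f b) /\
  (forall M, exists r, 0 <= r /\ M < f r).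

Definition OUAG : Prop :=
  exists gamma, Kinf gamma /\
    forall eps r s, 0 < eps -> 0 < r -> 0 < s ->
      exists tau, inI (disc S) tau /\
        forall x u t, `|x| < r -> Uin S u -> Unorm S u < s ->
          inI (disc S) t -> tau <= t ->
          `|yout t x u| <= eps + gamma (Unorm S u).

(* sup{...} < oo  is written as: the set of values is bounded above *)
Definition BORS : Prop :=
  forall C tau, 0 < C -> inI (disc S) tau ->
    exists M : R, forall x u t, `|x| < C -> Uin S u -> Unorm S u < C ->
      inI (disc S) t -> t < tau -> `|yout t x u| <= M.

Definition OUGB : Prop :=
  exists sigma gamma (c : R), Kinf sigma /\ Kinf gamma /\ 0 < c /\
    forall x u t, Uin S u -> inI (disc S) t ->
      `|yout t x u| <= sigma `|x| + gamma (Unorm S u) + c.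

End Props.

From mathcomp Require Import all_boot all_order all_algebra.
From mathcomp Require Import all_classical all_reals all_analysis.
From mathcomp Require Import lra.
Set Implicit Arguments. Unset Strict Implicit. Unset Printing Implicit Defensive.
Import Order.TTheory GRing.Theory Num.Theory.
Import numFieldNormedType.Exports.
Local Open Scope ring_scope.

(* On the ball of radius n+1 (in both state and input norm), OUAG with
   eps = 1 gives a time tau_n after which |y| <= 1 + gamma(|u|), and BORS
   bounds |y| by some M_n before tau_n.  Hence |y| <= max(1, M_n) + gamma(|u|)
   there, and it remains to dominate the arbitrary sequence n |-> max(1, M_n)
   by a K_oo function of max(|x|, |u|).  The hinge function
   xi(m) = m + sum_k c_k (m - k)^+ does this: it is continuous, strictly
   increasing and unbounded, and xi(n+1) >= c_n. *)

Section Hinge.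
Variables (R : realType) (c : nat -> R).
Hypothesis c_ge0 : forall k, 0 <= c k.

Definition hinge_sum (N : nat) (m : R) : R :=
  m + \sum_(0 <= k < N) c k * Num.max 0 (m - k%:R).

Lemma hinge_sum_stable N1 N2 m :
  m <= N1%:R -> m <= N2%:R -> hinge_sum N1 m = hinge_sum N2 m.
Proof.
wlog N12 : N1 N2 / (N1 <= N2)%N.
  move=> W mN1 mN2; have [N12|/ltnW N21] := leqP N1 N2; first exact: W.
  by symmetry; apply: W.
move=> mN1 _; rewrite /hinge_sum (@big_cat_nat _ _ _ N1 0 N2 _ _ (leq0n N1) N12) /=.
rewrite [X in _ = _ + (_ + X)]big1_seq ?addr0 // => k /andP[_].
rewrite mem_index_iota => /andP[N1k _].
by rewrite (max_idPl _) ?mulr0 // subr_le0 (le_trans mN1) // ler_nat.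
Qed.

Lemma hinge_sum_continuous N : continuous (hinge_sum N).
Proof.
move=> m; apply: continuousD; first exact: cvg_id.
move: m; apply: (@continuous_big R _ +%R 0 xpredT add_continuous) => k _ m.
apply: cvgM; first exact: cvg_cst.
apply: (@continuous_max R R (fun=> 0) (fun y : R => y - k%:R) m); first exact: cvg_cst.
by apply: continuousB; [exact: cvg_id | exact: cvg_cst].
Qed.

Lemma hinge_sum_lt N : {homo hinge_sum N : a b / a < b}.
Proof.
move=> a b ab; rewrite /hinge_sum ltr_leD // ler_sum // => k _.
by rewrite ler_wpM2l // le_max2 // lerD // ltW.
Qed.

(* The terms with k >= m vanish, so truncating the series at any N >= m gives
   the same value; this makes [hinge] locally a finite sum. *)
Definition hinge (m : R) : R := hinge_sum (Num.truncn m).+1 m.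

Lemma hingeE N m : m <= N%:R -> hinge m = hinge_sum N m.
Proof. by apply: hinge_sum_stable; exact/ltW/truncnS_gt. Qed.

Lemma hinge0 : hinge 0 = 0.
Proof. by rewrite (@hingeE 0) // /hinge_sum big_geq // addr0. Qed.

Lemma hinge_continuous : continuous hinge.
Proof.
move=> m0; set N := (Num.truncn m0).+1.
have hinge_near : \forall m \near m0, hinge_sum N m = hinge m.
  by near do rewrite (@hingeE N) // ltW //; exact: lt_nbhsl (truncnS_gt m0).
apply: cvg_trans (near_eq_cvg hinge_near) _.
by rewrite (@hingeE N); [exact: hinge_sum_continuous | exact/ltW/truncnS_gt].
Unshelve. all: end_near.
Qed.

Lemma hinge_lt : {homo hinge : a b / a < b}.
Proof.
move=> a b ab; set N := (Num.truncn b).+1.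
have bN : b <= N%:R by exact/ltW/truncnS_gt.
by rewrite (@hingeE N a) ?(@hingeE N b) ?hinge_sum_lt // (le_trans (ltW ab)).
Qed.

Lemma hinge_ge m : 0 <= m -> m <= hinge m.
Proof.
move=> m0; rewrite /hinge /hinge_sum lerDl.
by apply: sumr_ge0 => k _; rewrite mulr_ge0 // le_max lexx.
Qed.

Lemma hinge_ge_coef n m : n.+1%:R <= m -> c n <= hinge m.
Proof.
move=> nm; have m0 : 0 <= m := le_trans (ler0n _ _) nm.
have term_ge : c n <= c n * Num.max 0 (m - n%:R).
  by rewrite ler_peMr // le_max lerBrDr addrC natr1 nm orbT.
have n_lt : (n < (Num.truncn m).+1)%N.
  by rewrite ltnS truncn_ge_nat // (le_trans _ nm) // ler_nat.
rewrite /hinge /hinge_sum big_mkord (bigD1 (Ordinal n_lt)) //=.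
rewrite (le_trans term_ge) // addrCA lerDl addr_ge0 //.
by apply: sumr_ge0 => k _; rewrite mulr_ge0 // le_max lexx.
Qed.

Lemma hinge_Kinf : Kinf hinge.
Proof.
split; first exact: hinge0.
split; first exact: continuous_subspaceT hinge_continuous.
split; first by move=> a b _; exact: hinge_lt.
move=> M; exists (`|M| + 1); split; first by rewrite addr_ge0.
by rewrite (lt_le_trans _ (hinge_ge _)) ?addr_ge0 // ltr_pwDr // ler_norm.
Qed.

End Hinge.

Lemma Kinf_ge0 (R : realType) (f : R -> R) r : Kinf f -> 0 <= r -> 0 <= f r.
Proof.
move=> [f0 [_ [f_lt _]]]; rewrite le_eqVlt => /orP[/eqP <-|r_gt0]; first by rewrite f0.
by rewrite -f0 ltW // f_lt.
Qed.

Lemma Kinf_le (R : realType) (f : R -> R) a b :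
  Kinf f -> 0 <= a -> a <= b -> f a <= f b.
Proof.
move=> [_ [_ [f_lt _]]] a0; rewrite le_eqVlt => /orP[/eqP -> //|ab].
exact/ltW/f_lt.
Qed.

Lemma KinfD (R : realType) (f g : R -> R) :
  Kinf f -> Kinf g -> Kinf (fun r => f r + g r).
Proof.
move=> Kf Kg; move: (Kf) (Kg) => [f0 [f_cont [f_lt _]]] [g0 [g_cont [g_lt g_unb]]].
split; first by rewrite f0 g0 addr0.
split; first by move=> x; apply: continuousD; [exact: f_cont | exact: g_cont].
split; first by move=> a b a0 ab; rewrite ltrD ?f_lt ?g_lt.
move=> M; have [r [r0 Mr]] := g_unb M; exists r; split => //.
by rewrite (lt_le_trans Mr) // lerDr Kinf_ge0.
Qed.

Lemma Kinf_max_le (R : realType) (f : R -> R) a b :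
  Kinf f -> 0 <= a -> 0 <= b -> f (Num.max a b) <= f a + f b.
Proof.
move=> Kf a0 b0; have [_|_] := leP a b.
  by rewrite lerDr Kinf_ge0.
by rewrite lerDl Kinf_ge0.
Qed.

Lemma Kinf_bound_seq (R : realType) (B : nat -> R) :
  exists2 xi, Kinf xi & forall n, B n <= B 0%N + xi n%:R.
Proof.
pose c k := `|B k.+1 - B 0%N|.
have c_ge0 k : 0 <= c k by exact: normr_ge0.
exists (hinge c); first exact: hinge_Kinf.
case=> [|n]; first by rewrite hinge0 addr0.
by rewrite -lerBlDl (le_trans (ler_norm _)) // hinge_ge_coef.
Qed.

Lemma OUGB_of_ball_bounds (R : realType) (X : normedModType R) (U : lmodType R)
    (Y : normedModType R) (S : CSys X U Y) (gam : R -> R) (b : nat -> R) :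
  Kinf gam ->
  (forall n x u t, `|x| < n.+1%:R -> Uin S u -> Unorm S u < n.+1%:R ->
     inI (disc S) t -> `|yout S t x u| <= b n + gam (Unorm S u)) ->
  OUGB S.
Proof.
move=> Kgam ball_bound; have [xi Kxi b_le] := Kinf_bound_seq b.
exists xi, (fun r => gam r + xi r), (Num.max 1 (b 0%N)).
split=> //; split; first exact: KinfD.
split=> [|x u t Hu Ht]; first by rewrite lt_max ltr01.
have u0 := Unorm_ge0 Hu.
set m := Num.max `|x| (Unorm S u); set n := Num.truncn m.
have x_le : `|x| <= m by rewrite le_max lexx.
have u_le : Unorm S u <= m by rewrite le_max lexx orbT.
have n_le : n%:R <= m by rewrite truncn_le (le_trans u0).
have lt_n1 r : r <= m -> r < n.+1%:R := fun r_le => le_lt_trans r_le (truncnS_gt m).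
have y_le := ball_bound n x u t (lt_n1 _ x_le) Hu (lt_n1 _ u_le) Ht.
have xi_n := Kinf_le Kxi (ler0n _ n) n_le.
have xi_m := Kinf_max_le Kxi (normr_ge0 x) u0.
have b0_le : b 0%N <= Num.max 1 (b 0%N) by rewrite le_max lexx orbT.
have := b_le n; lra.
Qed.

Theorem lemma7 (R : realType) (X : normedModType R) (U : lmodType R)
  (Y : normedModType R) (S : CSys X U Y) :
  OUAG S -> BORS S -> OUGB S.
Proof.
move=> [gam [Kgam OUAG_gam]] BORS_S.
have [tau Htau] := choice (fun n : nat =>
  OUAG_gam 1 n.+1%:R n.+1%:R ltr01 (ltr0Sn _ n) (ltr0Sn _ n)).
have [M HM] := choice (fun n : nat => BORS_S n.+1%:R (tau n) (ltr0Sn _ n) (Htau n).1).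
apply: (OUGB_of_ball_bounds (b := fun n => Num.max 1 (M n)) Kgam).
move=> n x u t Hx Hu HU Ht; have gam_ge0 := Kinf_ge0 Kgam (Unorm_ge0 Hu).
have [tau_le|t_lt] := leP (tau n) t.
- by rewrite (le_trans ((Htau n).2 x u t Hx Hu HU Ht tau_le)) // lerD2r le_max lexx.
- by rewrite (le_trans (HM n x u t Hx Hu HU Ht t_lt)) // ler_wpDr // le_max lexx orbT.
Qed.
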